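(* Let $0<\beta<\gamma\le1$, $p>0$, $m\ge0$ an integer, and $\theta=(k_r)$ a lacunary sequence. Then $N_\theta^\beta(p,F,\Delta^m)\subset N_\theta^\gamma(p,F,\Delta^m)$, and this inclusion is strict.
   Context: A fuzzy number is a map $X:\mathbb{R}\to[0,1]$ which is normal, fuzzy convex, upper semicontinuous, with compact closure of $\{t:X(t)>0\}$; $L(\mathbb{R})$ is the set of fuzzy numbers. Level sets $[X]^\alpha=\{t:X(t)\ge\alpha\}$ ($\alpha\in(0,1]$), $[X]^0=\overline{\{t:X(t)>0\}}$, are compact intervals $[u^\alpha,v^\alpha]$. Subtraction: $[X-Y]^\alpha=[u_1^\alpha-v_2^\alpha,v_1^\alpha-u_2^\alpha]$. Metric: $d(X,Y)=\sup_{\alpha\in[0,1]}\max\{|u_1^\alpha-u_2^\alpha|,|v_1^\alpha-v_2^\alpha|\}$. $(\Delta^0X)_k=X_k$, $(\Delta^1X)_k=X_k-X_{k+1}$, $(\Delta^mX)_k=(\Delta^1(\Delta^{m-1}X))_k$. A lacunary sequence is an increasing integer sequence $\theta=(k_r)_{r\ge0}$ with $k_0=0$, $h_r=k_r-k_{r-1}\to\infty$; $I_r=(k_{r-1},k_r]$. For $\beta\in(0,1]$, $N_\theta^\beta(p,F,\Delta^m)$ is the set of sequences $X=(X_k)$ of fuzzy numbers for which there is $X_0\in L(\mathbb{R})$ with $\lim_r\frac{1}{h_r^\beta}\sum_{k\in I_r}d(\Delta^mX_k,X_0)^p=0$. *)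

From HB Require Import structures.
From mathcomp Require Import all_boot all_order all_algebra.
From mathcomp Require Import all_classical all_reals all_analysis.
Set Implicit Arguments. Unset Strict Implicit. Unset Printing Implicit Defensive.
Import Order.TTheory GRing.Theory Num.Theory.
Import numFieldNormedType.Exports.
Local Open Scope classical_set_scope.
Local Open Scope ring_scope.

Section Fuzzy.
Variable R : realType.

Definition is_fuzzy (X : R -> R) : Prop :=
  [/\ (forall t, 0 <= X t <= 1),
      (exists t, X t = 1),
      (forall s t l, 0 <= l <= 1 -> Num.min (X s) (X t) <= X (l * s + (1 - l) * t)),
      (forall t e, 0 < e -> \forall s \near t, X s < X t + e)
    & compact (closure [set t | 0 < X t])].

Definition levelset (X : R -> R) (a : R) : set R :=
  if a == 0 then closure [set t | 0 < X t] else [set t | a <= X t].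

Definition lo (X : R -> R) (a : R) : R := inf (levelset X a).
Definition hi (X : R -> R) (a : R) : R := sup (levelset X a).

(* subtraction: the fuzzy number Z with [Z]^a = [u1^a - v2^a, v1^a - u2^a],
   given by its membership function Z t = sup {a in (0,1] | t in [Z]^a}
   (and 0 when there is no such a). *)
Definition fsub (X Y : R -> R) : R -> R := fun t =>
  sup ([set 0] `|` [set a | 0 < a <= 1 /\ lo X a - hi Y a <= t <= hi X a - lo Y a]).

Definition fdist (X Y : R -> R) : R :=
  sup [set e | exists a, 0 <= a <= 1 /\
        e = Num.max `|lo X a - lo Y a| `|hi X a - hi Y a|].

Fixpoint Delta (m : nat) (X : nat -> R -> R) : nat -> R -> R :=
  match m with
  | 0 => X
  | m'.+1 => fun k => fsub (Delta m' X k) (Delta m' X k.+1)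
  end.

End Fuzzy.

Definition hr (theta : nat -> nat) (r : nat) : nat := (theta r - theta r.-1)%N.

Definition lacunary (theta : nat -> nat) : Prop :=
  [/\ theta 0 = 0%N,
      (forall r, (theta r < theta r.+1)%N)
    & (forall M : nat, exists N : nat, forall r, (N <= r)%N -> (M <= hr theta r)%N)].

Definition N_theta {R : realType} (beta p : R) (m : nat) (theta : nat -> nat)
    (X : nat -> R -> R) : Prop :=
  (forall k, is_fuzzy (X k)) /\
  exists X0 : R -> R, is_fuzzy X0 /\
    (fun r : nat => ((hr theta r)%:R `^ beta)^-1 *
        \sum_((theta r.-1).+1 <= k < (theta r).+1)
           (fdist (Delta m X k) X0) `^ p) @ \oo --> (0 : R).

From HB Require Import structures.
From mathcomp Require Import all_boot all_order all_algebra.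
From mathcomp Require Import all_classical all_reals all_analysis.
From mathcomp Require Import ring lra.
Set Implicit Arguments. Unset Strict Implicit. Unset Printing Implicit Defensive.
Import Order.TTheory GRing.Theory Num.Theory.
Import numFieldNormedType.Exports.
Local Open Scope classical_set_scope.
Local Open Scope ring_scope.

(* Since h_r^-gamma <= h_r^-beta, every block average for beta dominates the one
   for gamma, which gives the inclusion.  For strictness, use crisp fuzzy numbers,
   for which Delta and d reduce to the real difference and |a - b|: choose X with
   Delta^m X equal to h_r^(beta/p) at k = k_r and to 0 elsewhere in I_r.  Against
   X_0 = 0 the r-th block average for gamma is h_r^(beta - gamma) -> 0.  For beta
   and any X_0, put L = u_0^0 (the left end of [X_0]^0), so d(c, X_0) >= |c - L|;
   since I_r contains both the spike and a zero as soon as h_r >= 2, and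
   h_r^(beta/p) <= |L| + |h_r^(beta/p) - L|, the block average stays >= 2^-p. *)

Section Difference.
Variable V : zmodType.

Fixpoint rDelta (m : nat) (x : nat -> V) : nat -> V :=
  match m with 0 => x | m'.+1 => fun k => rDelta m' x k - rDelta m' x k.+1 end.

Definition antidiff (y : nat -> V) (k : nat) : V := - \sum_(j < k) y j.

Lemma rDelta_iter_antidiff m y : rDelta m (iter m antidiff y) = y.
Proof.
elim: m y => // m IH y; rewrite iterSr /= IH; apply/funext => k.
by rewrite /antidiff big_ord_recr /= opprK addKr.
Qed.

End Difference.

Section Spike.
Variables (V : zmodType) (theta : nat -> nat).
Hypothesis theta_incr : forall r, (theta r < theta r.+1)%N.

Definition spike (v : nat -> V) (k : nat) : V :=
  \sum_(r < k.+1) (if theta r == k then v r else 0).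

Let theta_le : {mono theta : i j / (i <= j)%N} := le_mono (homo_ltn ltn_trans theta_incr).
Let theta_lt : {mono theta : i j / (i < j)%N} := leW_mono theta_le.

Lemma spike_theta v r : spike v (theta r) = v r.
Proof.
have r_le : (r < (theta r).+1)%N.
  by rewrite ltnS; elim: r => // r IH; apply: leq_ltn_trans IH (theta_incr r).
rewrite /spike (bigD1 (Ordinal r_le)) //= eqxx big1 ?addr0 // => j jr.
have theta_inj : injective theta := incn_inj theta_le.
by case: eqP => // /theta_inj eq_jr; rewrite -val_eqE /= eq_jr eqxx in jr.
Qed.

Lemma spike_gap v r k : (theta r < k < theta r.+1)%N -> spike v k = 0.
Proof.
case/andP=> lo_k k_hi; rewrite /spike big1 // => j _; case: eqP => // thj.
have : (theta r < theta j < theta r.+1)%N by rewrite thj lo_k.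
by rewrite !theta_lt ltnS => /andP[rj /leq_ltn_trans/(_ rj)]; rewrite ltnn.
Qed.

Lemma sum_block_spike (W : nmodType) (G : V -> W) v r :
  \sum_((theta r).+1 <= k < (theta r.+1).+1) G (spike v k) =
  G 0 *+ (hr theta r.+1).-1 + G (v r.+1).
Proof.
rewrite big_nat_recr /= ?spike_theta ?theta_incr //.
rewrite (eq_big_nat _ _ (F2 := fun=> G 0)) => [|k /spike_gap->//].
by rewrite sumr_const_nat /hr /= subnS.
Qed.

End Spike.

Section Crisp.
Variable R : realType.
Implicit Types (a b c t : R) (X : R -> R).

Definition crisp c : R -> R := fun t => (t == c)%:R.

Lemma crisp_ge0 c t : 0 <= crisp c t.
Proof. exact: ler0n. Qed.

Lemma crisp_le1 c t : crisp c t <= 1.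
Proof. by rewrite /crisp; case: (t == c). Qed.

Lemma support_crisp c : [set t | 0 < crisp c t] = [set c].
Proof.
apply/seteqP; split => t /=; rewrite /crisp; first by case: eqP; rewrite ?ltxx.
by move=> ->; rewrite eqxx ltr01.
Qed.

Lemma closure_set1 c : closure [set c] = [set c].
Proof.
by apply/esym/closure_id; apply: compact_closed; [exact: Rhausdorff | exact: compact_set1].
Qed.

Lemma crisp_fuzzy c : is_fuzzy (crisp c).
Proof.
split.
- by move=> t; rewrite crisp_ge0 crisp_le1.
- by exists c; rewrite /crisp eqxx.
- move=> s t l _; rewrite ge_min /crisp.
  have [->|sc] := eqVneq s c; last by rewrite ler0n.
  have [->|tc] := eqVneq t c; last by rewrite orbC ler0n.
  have -> : l * c + (1 - l) * c = c by ring.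
  by rewrite eqxx lexx.
- move=> t e e0; have [->|tc] := eqVneq t c.
    apply: filterE => s; rewrite [crisp c c]/crisp eqxx.
    by rewrite (le_lt_trans (crisp_le1 _ _)) // ltrDl.
  have : \forall s \near t, s - c != 0.
    by apply: (cvgr_neq0 _ (cvgB cvg_id (cvg_cst c))); rewrite subr_eq0.
  by apply: filterS => s; rewrite subr_eq0 /crisp => /negbTE->; rewrite (negbTE tc) add0r.
- by rewrite support_crisp closure_set1; exact: compact_set1.
Qed.

Lemma levelset_crisp c a : 0 <= a <= 1 -> levelset (crisp c) a = [set c].
Proof.
case/andP=> a0 a1; rewrite /levelset; have [_|an0] := eqVneq a 0.
  by rewrite support_crisp closure_set1.
apply/seteqP; split => t /=; rewrite /crisp; last by move=> ->; rewrite eqxx.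
by case: eqP => // _; rewrite leNgt lt_neqAle eq_sym an0 a0.
Qed.

Lemma lo_crisp c a : 0 <= a <= 1 -> lo (crisp c) a = c.
Proof. by move=> a01; rewrite /lo levelset_crisp // inf1. Qed.

Lemma hi_crisp c a : 0 <= a <= 1 -> hi (crisp c) a = c.
Proof. by move=> a01; rewrite /hi levelset_crisp // sup1. Qed.

Lemma fsub_crisp a b : fsub (crisp a) (crisp b) = crisp (a - b).
Proof.
apply/funext => t; rewrite /fsub.
have levels l u : 0 < l <= 1 ->
    (lo (crisp a) l - hi (crisp b) l <= u <= hi (crisp a) l - lo (crisp b) l) = (u == a - b).
  move=> /andP[l0 l1]; rewrite !lo_crisp ?hi_crisp ?(ltW l0) ?l1 //.
  by rewrite eq_le andbC.
rewrite [RHS]/crisp; have [->|tab] := eqVneq t (a - b); rewrite ?eqxx.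
  apply/le_anti/andP; split.
    by apply: ge_sup; [exists 0; left | move=> x [->|[/andP[_]]]].
  apply: ub_le_sup; last by right; rewrite /= levels ?ltr01 ?lexx ?eqxx.
  by exists 1 => x [->|[/andP[_]]].
set S := (X in sup X).
suff -> : S = [set 0] by rewrite sup1.
apply/seteqP; split => [x [//|[l01]]|x ->]; last by left.
by rewrite levels // (negbTE tab).
Qed.

Lemma fdist_crisp a b : fdist (crisp a) (crisp b) = `|a - b|.
Proof.
rewrite /fdist; set E := (X in sup X).
suff -> : E = [set `|a - b|] by rewrite sup1.
have l01 : 0 <= (0 : R) <= 1 by rewrite lexx ler01.
apply/seteqP; split => [e [l [? ->]]|e ->]; first by rewrite !lo_crisp ?hi_crisp // maxxx.
by exists 0; rewrite !lo_crisp ?hi_crisp // maxxx.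
Qed.

Lemma fuzzy_levelset_bounded X : is_fuzzy X ->
  exists2 M, 0 <= M & forall a, 0 <= a -> levelset X a `<=` [set t | `|t| <= M].
Proof.
case=> _ _ _ _ /compact_bounded[M0 [_ HM]].
have M1 : `|M0| < `|M0| + 1 by rewrite ltrDl.
exists (`|M0| + 1); first by rewrite addr_ge0.
have supp_le t : closure [set t | 0 < X t] t -> `|t| <= `|M0| + 1.
  by move=> ?; apply: (HM _ (le_lt_trans (ler_norm M0) M1)).
move=> a a0 t; rewrite /levelset; have [_|an0] := eqVneq a 0; first exact: supp_le.
move=> /= Xa; apply/supp_le/subset_closure.
by rewrite /= (lt_le_trans _ Xa) // lt_neqAle eq_sym an0.
Qed.

Lemma norm_sup_le (S : set R) M : 0 <= M -> S `<=` [set t | `|t| <= M] -> `|sup S| <= M.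
Proof.
move=> M0 SM; have [[x Sx]|/set0P/negP/negPn/eqP->] := pselect (S !=set0); last first.
  by rewrite sup0 normr0.
have ubS : has_ubound S by exists M => y /SM /ler_normlP[].
rewrite ler_norml; apply/andP; split.
  by apply: le_trans (ub_le_sup ubS Sx); have /ler_normlP[] := SM _ Sx; rewrite lerNl.
by apply: ge_sup => [|y /SM /ler_normlP[]]; [exists x|].
Qed.

Lemma norm_inf_le (S : set R) M : 0 <= M -> S `<=` [set t | `|t| <= M] -> `|inf S| <= M.
Proof.
move=> M0 SM; rewrite /inf normrN; apply: norm_sup_le => // _ [x Sx <-].
by rewrite /= normrN; apply: SM.
Qed.

Lemma fdist_crisp_ge c X : is_fuzzy X -> `|c - lo X 0| <= fdist (crisp c) X.
Proof.
move=> /fuzzy_levelset_bounded[M M0 XM]; rewrite /fdist; set E := (S in sup S).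
have ubE : has_ubound E.
  exists (`|c| + M) => _ [a [a01 ->]]; rewrite ge_max !lo_crisp ?hi_crisp //.
  have /XM XaM : 0 <= a by case/andP: a01.
  by apply/andP; split; rewrite (le_trans (ler_normB _ _)) // lerD2l;
    [apply: norm_inf_le | apply: norm_sup_le].
apply: le_trans (ub_le_sup ubE _); last by exists 0; rewrite lexx ler01.
by rewrite lo_crisp ?lexx ?ler01 // le_max lexx.
Qed.

Lemma Delta_crisp m (x : nat -> R) :
  Delta m (fun k => crisp (x k)) = fun k => crisp (rDelta m x k).
Proof. by elim: m => //= m ->; apply/funext => k; rewrite fsub_crisp. Qed.

End Crisp.

Lemma powR_addr_le (R : realType) (a b p : R) : 0 <= a -> 0 <= b -> 0 <= p ->
  (a + b) `^ p <= 2 `^ p * (a `^ p + b `^ p).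
Proof.
move=> a0 b0 p0; wlog ab : a b a0 b0 / a <= b.
  move=> wlog; have [/wlog|/ltW/wlog] := leP a b; first exact.
  by rewrite addrC [a `^ p + _]addrC; apply.
have ab2 : a + b <= 2 * b by lra.
rewrite (le_trans (ge0_ler_powR p0 _ _ ab2)) ?nnegrE ?addr_ge0 ?mulr_ge0 //.
by rewrite powRM // ler_wpM2l ?powR_ge0 // lerDr powR_ge0.
Qed.

Lemma natr_powR_cvgy (R : realType) (c : R) :
  0 < c -> (n%:R `^ c : R) @[n --> \oo] --> +oo.
Proof.
move=> c0; apply/cvgryPge => A; have [A0|A0] := leP A 0.
  by apply: filterE => n; exact: le_trans A0 (powR_ge0 _ _).
have -> : A = (A `^ c^-1) `^ c by rewrite -powRrM mulVf ?lt0r_neq0 ?powRr1 ?ltW.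
near=> n; rewrite ge0_ler_powR ?nnegrE ?(ltW c0) ?powR_ge0 //.
by near: n; exact: nbhs_infty_ger.
Unshelve. all: end_near.
Qed.

Lemma inv_powR_cvg0 (R : realType) (c : R) (u : nat -> nat) :
  0 < c -> u @ \oo --> \oo ->
  (((u n)%:R `^ c)^-1 : R) @[n --> \oo] --> 0.
Proof.
move=> c0 u_cvg; apply/gtr0_cvgV0; last exact: cvg_comp u_cvg (natr_powR_cvgy c0).
by near=> n; rewrite powR_gt0 // ltr0n; near: n; apply: (cvgnyPgt _).1 u_cvg 0%N.
Unshelve. all: end_near.
Qed.

Lemma lacunary_hr_cvg (theta : nat -> nat) : lacunary theta -> hr theta @ \oo --> \oo.
Proof. by case=> _ _ hr_big; apply/cvgnyPge => M; have [N HN] := hr_big M; exists N. Qed.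

Lemma N_theta_mono (R : realType) (beta gamma p : R) m theta X :
  0 < beta -> beta <= gamma -> N_theta beta p m theta X -> N_theta gamma p m theta X.
Proof.
move=> beta0 beta_gamma [Xf [X0 [X0f avg0]]]; split => //; exists X0; split => //.
apply: squeeze_cvgr (cvg_cst 0) avg0; apply: filterE => r.
have sum0 : 0 <= \sum_((theta r.-1).+1 <= k < (theta r).+1) fdist (Delta m X k) X0 `^ p.
  by apply: sumr_ge0 => k _; exact: powR_ge0.
rewrite mulr_ge0 ?invr_ge0 ?powR_ge0 ?ler_wpM2r //=.
have [->|h0] := posnP (hr theta r).
  by rewrite !powR0 ?invr0 // gt_eqF // (lt_le_trans beta0).
by rewrite lef_pV2 ?posrE ?powR_gt0 ?ltr0n // ler_powR // ler1n.
Qed.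

Section Witness.
Variables (R : realType) (beta p : R) (m : nat) (theta : nat -> nat).
Hypothesis p_gt0 : 0 < p.
Hypothesis theta_incr : forall r, (theta r < theta r.+1)%N.

Let hr_gt0 r : (0 < hr theta r.+1)%N.
Proof. by rewrite /hr subn_gt0. Qed.

Definition spike_height r : R := (hr theta r)%:R `^ (beta / p).

Lemma spike_height_powR r : spike_height r `^ p = (hr theta r)%:R `^ beta.
Proof. by rewrite -powRrM divfK ?lt0r_neq0. Qed.

Definition witness : nat -> R -> R :=
  fun k => crisp (iter m (@antidiff _) (spike theta spike_height) k).

Lemma witness_fuzzy k : is_fuzzy (witness k).
Proof. exact: crisp_fuzzy. Qed.

Lemma Delta_witness : Delta m witness = fun k => crisp (spike theta spike_height k).
Proof. by rewrite Delta_crisp rDelta_iter_antidiff. Qed.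

Let block_sum X0 r :=
  \sum_((theta r).+1 <= k < (theta r.+1).+1) fdist (Delta m witness k) X0 `^ p.

Lemma block_sum_crisp0 r : block_sum (crisp 0) r = (hr theta r.+1)%:R `^ beta.
Proof.
rewrite /block_sum Delta_witness; under eq_bigr do rewrite fdist_crisp subr0.
rewrite (sum_block_spike theta_incr (fun z : R => `|z| `^ p)) //.
by rewrite normr0 powR0 ?lt0r_neq0 // mul0rn add0r ger0_norm ?powR_ge0 // spike_height_powR.
Qed.

Lemma block_sum_ge X0 r : is_fuzzy X0 -> (1 < hr theta r.+1)%N ->
  (hr theta r.+1)%:R `^ beta <= 2 `^ p * block_sum X0 r.
Proof.
move=> X0f h_gt1; set L := lo X0 0; set v := spike_height r.+1.
have dist_ge k :
    `|spike theta spike_height k - L| `^ p <= fdist (Delta m witness k) X0 `^ p.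
  have := fdist_crisp_ge (spike theta spike_height k) X0f.
  rewrite Delta_witness => dist_ge; apply: ge0_ler_powR; rewrite ?nnegrE ?(ltW p_gt0) //.
  exact: le_trans dist_ge.
rewrite -spike_height_powR -/v.
apply: le_trans (ler_wpM2l (powR_ge0 _ _) (ler_sum _ (fun k _ => dist_ge k))).
rewrite (sum_block_spike theta_incr (fun z : R => `|z - L| `^ p)) // -/v sub0r normrN.
have v_le : v <= `|L| + `|v - L|.
  by rewrite -[v in v <= _](subrK L) addrC (le_trans (ler_norm _)) // ler_normD.
have v0 : 0 <= v := powR_ge0 _ _.
have p0 := ltW p_gt0.
apply: le_trans (ge0_ler_powR p0 _ _ v_le) _; rewrite ?nnegrE ?addr_ge0 //.
apply: le_trans (powR_addr_le (normr_ge0 _) (normr_ge0 _) p0) _.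
rewrite ler_wpM2l ?powR_ge0 // lerD2r.
by apply: (ler_wpMn2l (powR_ge0 _ _) (_ : 1 <= _)%N); rewrite -ltnS prednK // ltnW.
Qed.

Lemma witness_N_theta gamma : beta < gamma -> hr theta @ \oo --> \oo ->
  N_theta gamma p m theta witness.
Proof.
move=> beta_gamma hr_cvg; split; first exact: witness_fuzzy.
exists (crisp 0); split; first exact: crisp_fuzzy.
have gap_gt0 : 0 < gamma - beta by rewrite subr_gt0.
apply: cvg_trans (inv_powR_cvg0 gap_gt0 hr_cvg); apply: near_eq_cvg; near=> r.
have [r' ->] : exists r', r = r'.+1.
  by exists r.-1; rewrite prednK //; near: r; exact: nbhs_infty_gt.
have := block_sum_crisp0 r'; rewrite /block_sum /= => ->.
by rewrite powRB ?lt0r_neq0 ?ltr0n ?implybT // invf_div mulrC.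
Unshelve. all: end_near.
Qed.

Lemma witness_not_N_theta : hr theta @ \oo --> \oo -> ~ N_theta beta p m theta witness.
Proof.
move=> hr_cvg [_ [X0 [X0f avg0]]].
suff : (2 `^ p)^-1 <= 0 :> R by rewrite leNgt invr_gt0 powR_gt0.
rewrite -(cvg_lim _ avg0) //; apply: limr_ge; first exact: cvgP avg0.
near=> r; have [r' r_eq] : exists r', r = r'.+1.
  by exists r.-1; rewrite prednK //; near: r; exact: nbhs_infty_gt.
have : (1 < hr theta r)%N by near: r; exact: (cvgnyPgt _).1 hr_cvg 1%N.
rewrite r_eq /= => h_gt1.
rewrite mulrC ler_pdivlMr ?powR_gt0 ?ltr0n // ler_pdivrMl ?powR_gt0 //.
exact: block_sum_ge.
Unshelve. all: end_near.
Qed.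

End Witness.

Theorem theorem2p12 (R : realType) (beta gamma p : R) (m : nat) (theta : nat -> nat) :
  0 < beta -> beta < gamma -> gamma <= 1 -> 0 < p -> lacunary theta ->
  (forall X : nat -> R -> R, N_theta beta p m theta X -> N_theta gamma p m theta X) /\
  (exists X : nat -> R -> R, N_theta gamma p m theta X /\ ~ N_theta beta p m theta X).
Proof.
move=> beta_gt0 beta_gamma _ p_gt0 lac; have [_ theta_incr _] := lac.
have hr_cvg := lacunary_hr_cvg lac.
split=> [X|]; first exact: N_theta_mono (ltW beta_gamma).
exists (witness beta p m theta); split.
- exact: witness_N_theta.
- exact: witness_not_N_theta.
Qed.
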